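(* Let $(\mathcal{E},\mathcal{L},\mathcal{B})$ be a weakly left resolving labelled space whose accommodating family $\mathcal{B}$ is closed under relative complements, let $S$ be its associated inverse semigroup, and let $\xi$ be a filter in $E(S)$ with word $\alpha\in\mathcal{L}^{\le\infty}$. If $\xi_n$ is an ultrafilter in $\mathcal{B}_{\alpha_{1,n}}$ for some $n$ with $0<n\le|\alpha|$, then $\xi_m$ is an ultrafilter in $\mathcal{B}_{\alpha_{1,m}}$ for every $0<m<n$; if moreover $\xi_0\neq\emptyset$, then $\xi_0$ is an ultrafilter in $\mathcal{B}$.
   Context: A directed graph $\mathcal{E}=(\mathcal{E}^0,\mathcal{E}^1,r,s)$ has countable nonempty vertex set, edge set, range/source maps; paths satisfy $r(\lambda_i)=s(\lambda_{i+1})$. A labelled graph has a surjective labelling $\mathcal{L}:\mathcal{E}^1\to\mathcal{A}$ extended letterwise to finite and infinite paths. $\omega$ is the empty word, $\mathcal{L}^+=\bigcup_{n\ge1}\mathcal{L}(\mathcal{E}^n)$, $\mathcal{L}^*=\{\omega\}\cup\mathcal{L}^+$, $\mathcal{L}^\infty$ the labels of infinite paths, $\mathcal{L}^{\le\infty}=\mathcal{L}^*\cup\mathcal{L}^\infty$; $\alpha_{i,j}=\alpha_i\cdots\alpha_j$, $\alpha_{1,0}=\omega$. For $A\subseteq\mathcal{E}^0$, $\alpha\in\mathcal{L}^+$: $r(A,\alpha)=\{r(\lambda):\mathcal{L}(\lambda)=\alpha,\ s(\lambda)\in A\}$, $r(A,\omega)=A$, $r(\alpha)=r(\mathcal{E}^0,\alpha)$.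 $\mathcal{B}$ accommodating: closed under $r(\cdot,\alpha)$, finite intersections and unions, contains $r(\alpha)$ for $\alpha\in\mathcal{L}^+$; labelled space weakly left resolving if $r(A\cap B,\alpha)=r(A,\alpha)\cap r(B,\alpha)$ for $A,B\in\mathcal{B}$, $\alpha\in\mathcal{L}^+$. $\mathcal{B}_\alpha=\mathcal{B}\cap\mathcal{P}(r(\alpha))$, $\mathcal{B}_\omega=\mathcal{B}$. $S$ = triples $(\alpha,A,\beta)$, $\alpha,\beta\in\mathcal{L}^*$, $\emptyset\ne A\in\mathcal{B}_\alpha\cap\mathcal{B}_\beta$, plus $0$; product $(\alpha,A,\beta)(\gamma,B,\delta)=(\alpha\gamma',r(A,\gamma')\cap B,\delta)$ if $\gamma=\beta\gamma'$, $=(\alpha,A\cap r(B,\beta'),\delta\beta')$ if $\beta=\gamma\beta'$, $=0$ otherwise (empty middle entry identified with $0$). $E(S)=\{(\alpha,A,\alpha)\}\cup\{0\}$ with $p\le q$ iff $pq=p$. A filter in a poset with least element $0$ is a nonempty upward-closed subset not containing $0$ in which any two elements have a common lower bound in it; an ultrafilter is a maximal filter; filters in $\mathcal{B}_\alpha$ are under inclusion. The words of elements of a filter $\xi$ in $E(S)$ are pairwise comparable; the word of $\xi$ is the longest one if it exists ($\alpha\in\mathcal{L}^*$), and otherwise the unique $\alpha\in\mathcal{L}^\infty$ such that all elements of $\xi$ are of the form $(\alpha_{1,n},A,\alpha_{1,n})$. For $0\le n\le|\alpha|$ ($n$ finite), $\xi_n=\{A\in\mathcal{B}:(\alpha_{1,n},A,\alpha_{1,n})\in\xi\}$.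 *)

From Stdlib Require Import List Arith Classical ClassicalEpsilon.
Import ListNotations.
Set Implicit Arguments.

Section LabelledSpace.
Variables (V Ed A : Type) (r s : Ed -> V) (lab : Ed -> A).

Definition vset := V -> Prop.

Definition countable (T : Type) : Prop := exists f : T -> nat, forall x y, f x = f y -> x = y.

(* finite paths: nonempty lists of edges with r(e_i) = s(e_{i+1}) *)
Fixpoint consec (e : Ed) (l : list Ed) : Prop :=
  match l with
  | [] => True
  | e' :: l' => r e = s e' /\ consec e' l'
  end.

Definition in_Lplus (al : list A) : Prop :=
  exists e l, consec e l /\ map lab (e :: l) = al.
Definition in_Lstar (al : list A) : Prop := al = [] \/ in_Lplus al.
Definition in_Linf (al : nat -> A) : Prop :=
  exists p : nat -> Ed, (forall i, r (p i) = s (p (S i))) /\ (forall i, lab (p i) = al i).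

Inductive lword := Fin (al : list A) | Inf (al : nat -> A).

Definition in_Lle_inf (w : lword) : Prop :=
  match w with Fin al => in_Lstar al | Inf al => in_Linf al end.

Definition le_len (n : nat) (w : lword) : Prop :=
  match w with Fin al => n <= length al | Inf _ => True end.

Definition wpre (w : lword) (n : nat) : list A :=
  match w with Fin al => firstn n al | Inf al => map al (seq 0 n) end.

Definition rng (X : vset) (al : list A) : vset :=
  match al with
  | [] => X
  | _ => fun v => exists e l, consec e l /\ map lab (e :: l) = al /\
                   X (s e) /\ r (last l e) = v
  end.

Definition rall (al : list A) : vset := rng (fun _ => True) al.

Definition vsub (X Y : vset) : Prop := forall v, X v -> Y v.
Definition vnonempty (X : vset) : Prop := exists v, X v.

Variable B : vset -> Prop.

Definition accommodating : Prop :=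
  (forall X al, B X -> in_Lstar al -> B (rng X al)) /\
  (forall X Y, B X -> B Y -> B (fun v => X v /\ Y v)) /\
  (forall X Y, B X -> B Y -> B (fun v => X v \/ Y v)) /\
  (forall al, in_Lplus al -> B (rall al)).

Definition weakly_left_resolving : Prop :=
  forall X Y al, B X -> B Y -> in_Lplus al ->
    forall v, rng (fun u => X u /\ Y u) al v <-> (rng X al v /\ rng Y al v).

Definition closed_rel_compl : Prop :=
  forall X Y, B X -> B Y -> B (fun v => X v /\ ~ Y v).

Definition Bw (al : list A) (X : vset) : Prop := B X /\ vsub X (rall al).

(* elements of S: None = 0, Some (al, X, be) = (al, X, be) *)
Definition Selt := option (list A * vset * list A).

Definition inS (p : Selt) : Prop :=
  match p with
  | None => True
  | Some (al, X, be) => in_Lstar al /\ in_Lstar be /\ vnonempty X /\ Bw al X /\ Bw be X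
  end.

Definition is_prefix (be ga : list A) : Prop := firstn (length be) ga = be.

(* triple with empty middle entry identified with 0 *)
Definition mk (al : list A) (X : vset) (be : list A) : Selt :=
  if excluded_middle_informative (vnonempty X) then Some (al, X, be) else None.

Definition Smul (p q : Selt) : Selt :=
  match p, q with
  | Some (al, X, be), Some (ga, Y, de) =>
      if excluded_middle_informative (is_prefix be ga) then
        let ga' := skipn (length be) ga in
        mk (al ++ ga') (fun v => rng X ga' v /\ Y v) de
      else if excluded_middle_informative (is_prefix ga be) then
        let be' := skipn (length ga) be in
        mk al (fun v => X v /\ rng Y be' v) (de ++ be')
      else None
  | _, _ => None
  end.

Definition inES (p : Selt) : Prop :=
  inS p /\ match p with None => True | Some (al, _, be) => al = be end.

Definition ESle (p q : Selt) : Prop := Smul p q = p.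

Definition ES_filter (xi : Selt -> Prop) : Prop :=
  (forall p, xi p -> inES p) /\
  (exists p, xi p) /\
  (forall p q, xi p -> inES q -> ESle p q -> xi q) /\
  ~ xi None /\
  (forall p q, xi p -> xi q -> exists t, xi t /\ ESle t p /\ ESle t q).

Definition filter_word (xi : Selt -> Prop) (w : lword) : Prop :=
  match w with
  | Fin al => (exists X, xi (Some (al, X, al))) /\
              (forall be X ga, xi (Some (be, X, ga)) -> length be <= length al)
  | Inf al => (forall be X ga, xi (Some (be, X, ga)) ->
                  be = ga /\ be = map al (seq 0 (length be))) /\
              (forall be X ga, xi (Some (be, X, ga)) ->
                  exists be' Y ga', xi (Some (be', Y, ga')) /\ length be < length be')
  end.

Definition xi_n (xi : Selt -> Prop) (w : lword) (n : nat) : vset -> Prop :=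
  fun X => B X /\ xi (Some (wpre w n, X, wpre w n)).

(* filters and ultrafilters in the poset (P, inclusion) with least element the empty set *)
Definition set_filter (P : vset -> Prop) (F : vset -> Prop) : Prop :=
  (forall X, F X -> P X) /\
  (exists X, F X) /\
  (forall X Y, F X -> P Y -> vsub X Y -> F Y) /\
  (forall X, F X -> vnonempty X) /\
  (forall X Y, F X -> F Y -> exists Z, F Z /\ vsub Z X /\ vsub Z Y).

Definition set_ultrafilter (P : vset -> Prop) (F : vset -> Prop) : Prop :=
  set_filter P F /\
  (forall G, set_filter P G -> (forall X, F X -> G X) -> forall X, G X -> F X).

End LabelledSpace.

(* Write alpha_{1,n} = b beta with beta nonempty and m = |b|.  For idempotents,
   (b beta, Y, b beta) <= (b, X, b) exactly when Y is contained in r(X, beta); hence X in xi_m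
   implies r(X, beta) in xi_n, and conversely X in xi_m as soon as r(X, beta) contains a member
   of xi_n.  Weak left resolvingness makes X |-> r(X, beta) preserve intersections, so xi_m is a
   filter.  It is maximal: if A is not in xi_m, then r(A, beta) is not in xi_n, so the
   ultrafilter xi_n contains some D disjoint from r(A, beta); for X in xi_m, a member of xi_n
   below r(X, beta) and D is reached only from X \ A, so X \ A lies in xi_m and separates A
   from xi_m. *)
From Stdlib Require Import List Lia Classical ClassicalEpsilon FunctionalExtensionality PropExtensionality.
Import ListNotations.
Set Implicit Arguments.

Lemma firstn_length_app {T} (a d : list T) : firstn (length a) (a ++ d) = a.
Proof. induction a; simpl; f_equal; auto. Qed.

Lemma skipn_length_app {T} (a d : list T) : skipn (length a) (a ++ d) = d.
Proof. induction a; simpl; auto. Qed.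

Section Paths.
Variables (V Ed A : Type) (r s : Ed -> V) (lab : Ed -> A).

Lemma vset_ext (X Y : vset V) : (forall v, X v <-> Y v) -> X = Y.
Proof.
  intros H; apply functional_extensionality; intros v.
  apply propositional_extensionality; auto.
Qed.

Lemma last_cons_default (l : list Ed) : forall x d, last (x :: l) d = last l x.
Proof.
  induction l as [|y l IH]; intros x d; [reflexivity|].
  change (last (y :: l) d = last (y :: l) x). now rewrite !IH.
Qed.

Lemma last_app_cons (l1 : list Ed) : forall e e2 l2, last (l1 ++ e2 :: l2) e = last l2 e2.
Proof.
  induction l1 as [|y l1 IH]; intros e e2 l2; simpl app.
  - apply last_cons_default.
  - rewrite last_cons_default. apply IH.
Qed.

Lemma consec_app (l1 : list Ed) : forall e e2 l2,
  consec r s e (l1 ++ e2 :: l2) <->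
  consec r s e l1 /\ r (last l1 e) = s e2 /\ consec r s e2 l2.
Proof.
  induction l1 as [|y l1 IH]; intros e e2 l2; simpl app.
  - simpl. tauto.
  - change (r e = s y /\ consec r s y (l1 ++ e2 :: l2) <->
            (r e = s y /\ consec r s y l1) /\ r (last (y :: l1) e) = s e2 /\ consec r s e2 l2).
    rewrite last_cons_default, IH. tauto.
Qed.

Lemma path_label_split (l : list Ed) : forall e (x y : list A),
  consec r s e l -> map lab (e :: l) = x ++ y -> x <> [] -> y <> [] ->
  exists l1 e2 l2, l = l1 ++ e2 :: l2 /\ map lab (e :: l1) = x /\ map lab (e2 :: l2) = y.
Proof.
  induction l as [|e' l IH]; intros e x y Hc Hm Hx Hy;
    (destruct x as [|x1 xs]; [congruence|]); simpl in Hm; injection Hm as <- Hm.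
  - destruct xs, y; simpl in Hm; congruence.
  - destruct xs as [|x2 xs].
    + exists [], e', l. simpl in *. subst. auto.
    + destruct Hc as [_ Hc].
      destruct (IH e' (x2 :: xs) y Hc Hm ltac:(discriminate) Hy)
        as (l1 & e2 & l2 & -> & E1 & E2).
      exists (e' :: l1), e2, l2. simpl in *. rewrite E1. auto.
Qed.

Lemma in_Lstar_app (x y : list A) :
  in_Lstar r s lab (x ++ y) -> in_Lstar r s lab x /\ in_Lstar r s lab y.
Proof.
  intros H. destruct x as [|x1 xs]; [split; [left|]; auto|].
  destruct y as [|y1 ys]; [rewrite app_nil_r in H; split; [|left]; auto|].
  destruct H as [H|(e & l & Hc & Hm)]; [discriminate|].
  destruct (path_label_split Hc Hm)
    as (l1 & e2 & l2 & -> & E1 & E2); try discriminate.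
  apply consec_app in Hc as (H1 & _ & H3).
  split; right; [exists e, l1 | exists e2, l2]; auto.
Qed.

Lemma rng_app (X : vset V) (x y : list A) v :
  rng r s lab X (x ++ y) v <-> rng r s lab (rng r s lab X x) y v.
Proof.
  destruct x as [|x1 xs]; [simpl; tauto|].
  destruct y as [|y1 ys]; [rewrite app_nil_r; simpl; tauto|].
  change (rng r s lab X (x1 :: xs ++ y1 :: ys) v) with
    (exists e l, consec r s e l /\ map lab (e :: l) = x1 :: xs ++ y1 :: ys /\
                 X (s e) /\ r (last l e) = v).
  change (rng r s lab (rng r s lab X (x1 :: xs)) (y1 :: ys) v) with
    (exists e l, consec r s e l /\ map lab (e :: l) = y1 :: ys /\
       (exists e' l', consec r s e' l' /\ map lab (e' :: l') = x1 :: xs /\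
                      X (s e') /\ r (last l' e') = s e) /\
       r (last l e) = v).
  split.
  - intros (e & l & Hc & Hm & HX & Hv).
    destruct (path_label_split Hc Hm)
      as (l1 & e2 & l2 & -> & E1 & E2); try discriminate.
    apply consec_app in Hc as (H1 & H2 & H3). rewrite last_app_cons in Hv.
    exists e2, l2. repeat split; auto. exists e, l1. auto.
  - intros (e2 & l2 & H3 & E2 & (e & l1 & H1 & E1 & HX & H2) & Hv).
    exists e, (l1 ++ e2 :: l2). rewrite consec_app, last_app_cons. repeat split; auto.
    change (lab e :: map lab (l1 ++ e2 :: l2) = x1 :: xs ++ y1 :: ys).
    rewrite map_app. simpl in E1. injection E1 as -> ->. now rewrite E2.
Qed.

Lemma rng_sub (X Y : vset V) al :
  vsub X Y -> vsub (rng r s lab X al) (rng r s lab Y al).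
Proof.
  intros H v. destruct al as [|a al]; simpl; auto.
  intros (e & l & H1 & H2 & H3 & H4). exists e, l. auto.
Qed.

Lemma rng_nonempty_src (X : vset V) al v : rng r s lab X al v -> vnonempty X.
Proof.
  destruct al as [|a al]; simpl; [exists v; auto|].
  intros (e & l & _ & _ & HX & _). exists (s e). auto.
Qed.

End Paths.

Section IdempotentOrder.
Variables (V Ed A : Type) (r s : Ed -> V) (lab : Ed -> A).

Lemma mk_nonempty (al be : list A) (X : vset V) :
  vnonempty X -> mk al X be = Some (al, X, be).
Proof.
  intros H; unfold mk. destruct (excluded_middle_informative (vnonempty X)); tauto.
Qed.

Lemma mk_Some_inv (al be al' be' : list A) (X X' : vset V) :
  mk al X be = Some (al', X', be') -> al = al' /\ X = X' /\ be = be'.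
Proof.
  unfold mk. destruct (excluded_middle_informative (vnonempty X)); [|discriminate].
  intros H; injection H; auto.
Qed.

Lemma Smul_idem_app (a d : list A) (C Y : vset V) :
  Smul r s lab (Some (a ++ d, C, a ++ d)) (Some (a, Y, a)) =
  mk (a ++ d) (fun v => C v /\ rng r s lab Y d v) (a ++ d).
Proof.
  unfold Smul. destruct (excluded_middle_informative (is_prefix (a ++ d) a)) as [Hp|Hp].
  - assert (d = []) as ->.
    { apply (f_equal (@length A)) in Hp. rewrite length_firstn, length_app in Hp.
      destruct d; auto. simpl in Hp. lia. }
    now rewrite !app_nil_r, skipn_all, app_nil_r.
  - destruct (excluded_middle_informative (is_prefix a (a ++ d))) as [Hq|Hq].
    + now rewrite skipn_length_app.
    + exfalso; apply Hq, firstn_length_app.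
Qed.

Lemma ESle_idem_app (a d : list A) (C Y : vset V) :
  vnonempty C -> vsub C (rng r s lab Y d) ->
  ESle r s lab (Some (a ++ d, C, a ++ d)) (Some (a, Y, a)).
Proof.
  intros Hn Hs. unfold ESle. rewrite Smul_idem_app.
  replace (fun v => C v /\ rng r s lab Y d v) with C; [now apply mk_nonempty|].
  apply vset_ext. intros v. split; [auto | tauto].
Qed.

Lemma ESle_idem (a : list A) (C Y : vset V) :
  vnonempty C -> vsub C Y -> ESle r s lab (Some (a, C, a)) (Some (a, Y, a)).
Proof.
  intros Hn Hs. rewrite <- (app_nil_r a) at 1 2. now apply ESle_idem_app.
Qed.

Lemma ESle_idem_inv (g a : list A) (C Y : vset V) :
  ESle r s lab (Some (g, C, g)) (Some (a, Y, a)) ->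
  exists d, g = a ++ d /\ vsub C (rng r s lab Y d).
Proof.
  unfold ESle, Smul. intros H.
  destruct (excluded_middle_informative (is_prefix g a)) as [Hp|Hp].
  - apply mk_Some_inv in H as (_ & HC & ->). rewrite skipn_all in HC.
    exists []. rewrite app_nil_r. split; auto.
    intros v Hv. rewrite <- HC in Hv. tauto.
  - destruct (excluded_middle_informative (is_prefix a g)); [|discriminate].
    apply mk_Some_inv in H as (_ & HC & Hg). exists (skipn (length a) g). split; auto.
    intros v Hv. rewrite <- HC in Hv. tauto.
Qed.

End IdempotentOrder.

Section Ultrafilters.
Variables (V : Type) (P F : vset V -> Prop).

Lemma set_ultrafilter_separate :
  set_ultrafilter P F -> (forall X Y, P X -> P Y -> P (fun v => X v /\ Y v)) ->
  forall A0, P A0 -> ~ F A0 -> exists C, F C /\ forall v, A0 v -> C v -> False.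
Proof.
  intros [[Hs [[C0 HC0] [Hup [Hne Hlb]]]] Hmax] Hcap A0 HP HF.
  apply NNPP; intros Hno.
  assert (Hmeet : forall C, F C -> vnonempty (fun v => A0 v /\ C v)).
  { intros C HC. apply NNPP; intros Hn. apply Hno. exists C. split; auto.
    intros v H1 H2. apply Hn. exists v. auto. }
  (* the filter generated by F and A0 is proper, so it is F itself *)
  set (G := fun Y => P Y /\ exists C, F C /\ forall v, A0 v -> C v -> Y v).
  assert (HG : set_filter P G).
  { split; [|split; [|split; [|split]]].
    - intros X [H _]; auto.
    - exists (fun v => A0 v /\ C0 v). split; [apply Hcap; auto|].
      exists C0. split; auto.
    - intros X Y [_ (C & HC & HCs)] HY Hxy. split; auto. exists C. split; auto.
    - intros X [_ (C & HC & HCs)]. destruct (Hmeet C HC) as [v [H1 H2]]. exists v. auto.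
    - intros X Y [HX (C1 & HC1 & H1)] [HY (C2 & HC2 & H2)].
      destruct (Hlb C1 C2 HC1 HC2) as (C3 & HC3 & S1 & S2).
      exists (fun v => A0 v /\ C3 v). repeat split.
      + apply Hcap; auto.
      + exists C3. split; auto.
      + intros v [Ha Hc]. apply H1; auto.
      + intros v [Ha Hc]. apply H2; auto. }
  apply HF, (Hmax G HG).
  - intros X HX. split; auto. exists X. split; auto.
  - split; auto. exists C0. split; auto.
Qed.

Lemma set_ultrafilter_of_separate :
  set_filter P F ->
  (forall A0, P A0 -> ~ F A0 -> exists C, F C /\ forall v, A0 v -> C v -> False) ->
  set_ultrafilter P F.
Proof.
  intros HF Hsep. split; auto. intros G [Gs [_ [_ [Gne Glb]]]] Hsub X HX.
  apply NNPP; intros Hn. destruct (Hsep X (Gs X HX) Hn) as (C & HC & Hdis).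
  destruct (Glb X C HX (Hsub C HC)) as (Z & HZ & S1 & S2).
  destruct (Gne Z HZ) as [v Hv]. apply (Hdis v); auto.
Qed.

End Ultrafilters.

Section Levels.
Variables (V Ed A : Type) (r s : Ed -> V) (lab : Ed -> A) (B : vset V -> Prop).
Hypotheses (hacc : accommodating r s lab B) (hwlr : weakly_left_resolving r s lab B)
  (hcompl : closed_rel_compl B).
Variable xi : Selt V A -> Prop.
Hypothesis hxi : ES_filter r s lab B xi.

Lemma Bw_cap al X Y :
  Bw r s lab B al X -> Bw r s lab B al Y -> Bw r s lab B al (fun v => X v /\ Y v).
Proof. intros [HX HXs] [HY _]. split; [now apply hacc | intros v [Hv _]; auto]. Qed.

Lemma Bw_rng al X d : in_Lstar r s lab d ->
  Bw r s lab B al X -> Bw r s lab B (al ++ d) (rng r s lab X d).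
Proof.
  intros Hd [HX HXs]. split; [now apply hacc|].
  intros v Hv. apply rng_app. revert Hv. now apply rng_sub.
Qed.

Lemma inES_idem al X : in_Lstar r s lab al -> vnonempty X -> Bw r s lab B al X ->
  inES r s lab B (Some (al, X, al)).
Proof. intros Hl Hn HX. repeat split; auto; apply HX. Qed.

Lemma xi_Some_inv al X be : xi (Some (al, X, be)) ->
  al = be /\ in_Lstar r s lab al /\ vnonempty X /\ Bw r s lab B al X.
Proof.
  intros H. destruct hxi as [hES _]. apply hES in H.
  destruct H as [(H1 & _ & H3 & H4 & _) H6]. auto.
Qed.

Lemma xi_up al X Y : xi (Some (al, X, al)) -> Bw r s lab B al Y -> vsub X Y ->
  xi (Some (al, Y, al)).
Proof.
  intros HX HY Hs. destruct hxi as (_ & _ & hup & _).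
  destruct (xi_Some_inv HX) as (_ & Hl & [v Hv] & _).
  apply hup with (Some (al, X, al)); auto.
  - apply inES_idem; auto. exists v; auto.
  - apply ESle_idem; auto. exists v; auto.
Qed.

(* [b] and [b ++ beta] stand for the prefixes alpha_{1,m} and alpha_{1,n} of the word of xi. *)
Section TwoLevels.
Variables (b beta : list A).
Hypothesis hbeta : beta <> [].
Hypothesis hult : set_ultrafilter (Bw r s lab B (b ++ beta))
  (fun X => B X /\ xi (Some (b ++ beta, X, b ++ beta))).

Let xi_long : exists Y, B Y /\ xi (Some (b ++ beta, Y, b ++ beta)).
Proof. apply hult. Qed.

Let Lstar_long : in_Lstar r s lab (b ++ beta).
Proof. destruct xi_long as (Y & _ & H). apply xi_Some_inv in H. tauto. Qed.

Let Lstar_beta : in_Lstar r s lab beta.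
Proof. apply (in_Lstar_app _ _ Lstar_long). Qed.

Let Lplus_beta : in_Lplus r s lab beta.
Proof. destruct Lstar_beta; [congruence | assumption]. Qed.

Lemma xi_shorten X Y : Bw r s lab B b X -> xi (Some (b ++ beta, Y, b ++ beta)) ->
  vsub Y (rng r s lab X beta) -> xi (Some (b, X, b)).
Proof.
  intros HX HY Hsub. destruct hxi as (_ & _ & hup & _).
  destruct (xi_Some_inv HY) as (_ & _ & [v Hv] & _).
  apply hup with (Some (b ++ beta, Y, b ++ beta)); auto.
  - apply inES_idem; auto.
    + apply (in_Lstar_app _ _ Lstar_long).
    + apply (rng_nonempty_src r s lab X beta v). auto.
  - apply ESle_idem_app; auto. exists v; auto.
Qed.

Lemma xi_extend X : xi (Some (b, X, b)) ->
  xi (Some (b ++ beta, rng r s lab X beta, b ++ beta)).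
Proof.
  intros HX. destruct hxi as (_ & _ & hup & hNone & hlb).
  destruct xi_long as (Y & _ & HY).
  destruct (hlb _ _ HY HX) as ([[[g C] g']|] & Ht & L1 & L2); [|contradiction].
  destruct (xi_Some_inv Ht) as (<- & _ & [v Hv] & _).
  destruct (xi_Some_inv HX) as (_ & _ & _ & HBX).
  destruct (ESle_idem_inv L1) as (d & -> & _).
  destruct (ESle_idem_inv L2) as (d' & Eg & HC).
  (* a common lower bound of (b ++ beta, Y) and (b, X) sits at some level b ++ beta ++ d *)
  assert (d' = beta ++ d) as ->.
  { rewrite <- app_assoc in Eg. eapply app_inv_head; eauto. }
  assert (HC' : vsub C (rng r s lab (rng r s lab X beta) d)).
  { intros u Hu. apply rng_app. auto. }
  apply hup with (Some ((b ++ beta) ++ d, C, (b ++ beta) ++ d)); auto.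
  - apply inES_idem; auto; [|now apply Bw_rng].
    apply (rng_nonempty_src r s lab _ d v). auto.
  - apply ESle_idem_app; auto. exists v; auto.
Qed.

Lemma xi_short_nonempty : b <> [] -> exists X, B X /\ xi (Some (b, X, b)).
Proof.
  intros Hb. destruct xi_long as (Y & _ & HY).
  destruct (xi_Some_inv HY) as (_ & _ & _ & _ & HYs).
  assert (HBb : B (rall r s lab b)).
  { apply hacc. destruct (in_Lstar_app _ _ Lstar_long) as [[|] _]; tauto. }
  exists (rall r s lab b). split; auto. apply xi_shorten with Y; auto.
  - split; auto. intros v H; exact H.
  - intros v Hv. apply rng_app, HYs, Hv.
Qed.

Hypothesis hshort : exists X, B X /\ xi (Some (b, X, b)).

Lemma xi_short_filter :
  set_filter (Bw r s lab B b) (fun X => B X /\ xi (Some (b, X, b))).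
Proof.
  destruct hult as [(_ & _ & _ & _ & Flb) _]. split; [|split; [|split; [|split]]].
  - intros X [_ H]. apply xi_Some_inv in H. tauto.
  - exact hshort.
  - intros X Y [_ HX] HY Hs. split; [apply HY|]. apply xi_up with X; auto.
  - intros X [_ H]. apply xi_Some_inv in H. tauto.
  - intros X1 X2 [H1 Hx1] [H2 Hx2].
    assert (Hl : forall X, B X -> xi (Some (b, X, b)) ->
      B (rng r s lab X beta) /\ xi (Some (b ++ beta, rng r s lab X beta, b ++ beta))).
    { intros X HB HX. split; [now apply hacc | now apply xi_extend]. }
    destruct (Flb _ _ (Hl X1 H1 Hx1) (Hl X2 H2 Hx2)) as (Z & [_ HxZ] & S1 & S2).
    destruct (xi_Some_inv Hx1) as (_ & _ & _ & HX1).
    destruct (xi_Some_inv Hx2) as (_ & _ & _ & HX2).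
    exists (fun v => X1 v /\ X2 v). split; [split|split].
    + now apply hacc.
    + apply xi_shorten with Z; [now apply Bw_cap | auto |].
      intros v Hv. apply (hwlr H1 H2 Lplus_beta). auto.
    + intros v [Hv _]; auto.
    + intros v [_ Hv]; auto.
Qed.

Lemma xi_short_ultrafilter :
  set_ultrafilter (Bw r s lab B b) (fun X => B X /\ xi (Some (b, X, b))).
Proof.
  apply set_ultrafilter_of_separate; [apply xi_short_filter|].
  intros A0 HA0 HnA0.
  destruct hult as [(_ & _ & _ & _ & Flb) _].
  assert (HA' : Bw r s lab B (b ++ beta) (rng r s lab A0 beta)) by now apply Bw_rng.
  assert (HnA' : ~ (B (rng r s lab A0 beta) /\
                    xi (Some (b ++ beta, rng r s lab A0 beta, b ++ beta)))).
  { intros [_ Hx]. apply HnA0. split; [apply HA0|].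
    apply xi_shorten with (rng r s lab A0 beta); auto. intros v Hv; exact Hv. }
  destruct (set_ultrafilter_separate hult (@Bw_cap _) _ HA' HnA')
    as (D & [HD HxD] & Hdis).
  destruct hshort as (X0 & HX0 & HxX0).
  destruct (xi_Some_inv HxX0) as (_ & _ & _ & HX0w).
  destruct (xi_Some_inv HxD) as (_ & _ & _ & _ & HDs).
  destruct (Flb (rng r s lab X0 beta) D) as (Z & [_ HxZ] & S1 & S2);
    [split; [now apply hacc | now apply xi_extend] | split; auto |].
  (* Z avoids r(A0, beta), so every path into Z starts outside A0 *)
  exists (fun v => X0 v /\ ~ A0 v). split.
  - assert (HB' : B (fun v => X0 v /\ ~ A0 v)) by (apply hcompl; [apply HX0w | apply HA0]).
    split; auto. apply xi_shorten with Z; auto.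
    + split; auto. intros v [H _]. now apply HX0w.
    + intros v Hv. destruct beta as [|b1 bs]; [congruence|].
      destruct (S1 v Hv) as (e & l & Hc & Hm & HX & Hl).
      exists e, l. repeat split; auto. intros HA. apply (Hdis v); auto.
      exists e, l. auto.
  - intros v H1 [_ H2]. auto.
Qed.

End TwoLevels.

Lemma Bw_nil : Bw r s lab B [] = B.
Proof.
  apply functional_extensionality; intros X. apply propositional_extensionality.
  unfold Bw. split; [tauto|]. split; [auto | intros v _; exact I].
Qed.

Lemma xi_prefix_ultrafilter a m : m < length a ->
  set_ultrafilter (Bw r s lab B a) (fun X => B X /\ xi (Some (a, X, a))) ->
  (0 < m \/ exists X, B X /\ xi (Some (firstn m a, X, firstn m a))) ->
  set_ultrafilter (Bw r s lab B (firstn m a))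
    (fun X => B X /\ xi (Some (firstn m a, X, firstn m a))).
Proof.
  intros Hm Hult Hne. rewrite <- (firstn_skipn m a) in Hult.
  assert (Hbeta : skipn m a <> []).
  { intros H. apply (f_equal (@length A)) in H. rewrite length_skipn in H. simpl in H. lia. }
  apply xi_short_ultrafilter with (beta := skipn m a); auto.
  destruct Hne as [Hm0|]; auto. apply xi_short_nonempty with (beta := skipn m a); auto.
  intros H. apply (f_equal (@length A)) in H. rewrite length_firstn in H. simpl in H. lia.
Qed.

End Levels.

Lemma wpre_length A (w : lword A) n : le_len n w -> length (wpre w n) = n.
Proof.
  destruct w as [al|al]; simpl; intros Hn.
  - rewrite length_firstn. lia.
  - now rewrite length_map, length_seq.
Qed.

Lemma wpre_firstn A (w : lword A) m n : m <= n -> wpre w m = firstn m (wpre w n).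
Proof.
  intros Hmn. destruct w as [al|al]; simpl.
  - rewrite firstn_firstn. f_equal. lia.
  - replace n with (m + (n - m)) by lia. rewrite seq_app, map_app.
    pose proof (firstn_length_app (map al (seq 0 m)) (map al (seq (0 + m) (n - m)))) as H.
    rewrite length_map, length_seq in H. now rewrite H.
Qed.

Theorem mainTheorem13
  (V Ed A : Type) (r s : Ed -> V) (lab : Ed -> A) (B : vset V -> Prop)
  (hV : countable V) (hEd : countable Ed) (hVne : inhabited V) (hEne : inhabited Ed)
  (hlab : forall a : A, exists e, lab e = a)
  (hacc : accommodating r s lab B)
  (hwlr : weakly_left_resolving r s lab B)
  (hcompl : closed_rel_compl B)
  (xi : Selt V A -> Prop)
  (hxi : ES_filter r s lab B xi)
  (w : lword A) (hw : filter_word xi w) (hwL : in_Lle_inf r s lab w)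
  (n : nat) (hn0 : 0 < n) (hn : le_len n w)
  (hult : set_ultrafilter (Bw r s lab B (wpre w n)) (xi_n B xi w n)) :
  (forall m, 0 < m -> m < n ->
     set_ultrafilter (Bw r s lab B (wpre w m)) (xi_n B xi w m)) /\
  ((exists X, xi_n B xi w 0 X) -> set_ultrafilter B (xi_n B xi w 0)).
Proof.
  unfold xi_n in *. pose proof (wpre_length w n hn) as Hlen.
  split.
  - intros m Hm0 Hmn. rewrite (wpre_firstn w (m := m) (n := n) ltac:(lia)).
    apply xi_prefix_ultrafilter; auto. lia.
  - intros Hex. rewrite (wpre_firstn w (m := 0) (n := n) ltac:(lia)) in Hex |- *.
    rewrite <- (Bw_nil r s lab B) at 1.
    apply xi_prefix_ultrafilter; auto. lia.
Qed.
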